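(* Let $P$ be a poset on $[n]$ with natural labeling. Let $G$ be the digraph with vertex set $\mathcal{L}(P)$ having an edge $\pi\to\pi'$ if and only if $\pi'=\pi\partial_j$ for some $j\in[n]$ (respectively, $\pi'=\pi\tau_j$ for some $j\in[n-1]$). Then $G$ is strongly connected.
   Context: $\mathcal{L}(P)=\{\pi\in S_n : i\prec j \Rightarrow \pi^{-1}_i<\pi^{-1}_j\}$ in one-line notation $\pi=\pi_1\cdots\pi_n$. $\pi\tau_i$ ($1\le i<n$) swaps $\pi_i,\pi_{i+1}$ if they are incomparable in $P$ and is $\pi$ otherwise; operators act on the right, $\pi(\sigma\tau)=(\pi\sigma)\tau$; $\partial_j=\tau_j\tau_{j+1}\cdots\tau_{n-1}$ for $1\le j\le n$. *)

(* Elements of [n] and positions 1..n are encoded 0-indexed as 'I_n. *)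
From mathcomp Require Import all_boot all_fingroup.
Set Implicit Arguments. Unset Strict Implicit. Unset Printing Implicit Defensive.

Section Defs.
Variable n : nat.
Variable le : rel 'I_n.

Definition prec (i j : 'I_n) : bool := le i j && (i != j).

Definition comparableP (i j : 'I_n) : bool := le i j || le j i.

Definition is_poset : Prop :=
  [/\ reflexive le, antisymmetric le & transitive le].

Definition natural_labeling : Prop := forall i j, prec i j -> (i < j)%N.

(* One-line notation: pi_k = pi k (entry at position k); pi^{-1} i = position of i. *)
Definition linext (pi : {perm 'I_n}) : bool :=
  [forall i, forall j, prec i j ==> (pi^-1 i < pi^-1 j)%N]%g.

(* tau i (0-indexed position i, i.e. the paper's tau_{i+1}): swaps entries
   at positions i and i+1 if incomparable; identity otherwise (and when out of range).
   (tperm a b * pi) k = pi (tperm a b k). *)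
Definition tau (pi : {perm 'I_n}) (i : nat) : {perm 'I_n} :=
  match (insub i : option 'I_n), (insub i.+1 : option 'I_n) with
  | Some a, Some b => if ~~ comparableP (pi a) (pi b) then (tperm a b * pi)%g else pi
  | _, _ => pi
  end.

(* partial j (0-indexed, the paper's ∂_{j+1}) = tau_j tau_{j+1} ... tau_{n-2},
   operators acting on the right (first tau_j is applied). *)
Definition partial (j : nat) (pi : {perm 'I_n}) : {perm 'I_n} :=
  foldl tau pi (iota j (n.-1 - j)).

Definition edge_partial : rel {perm 'I_n} :=
  fun pi pi' => [&& linext pi, linext pi' & [exists j : 'I_n, pi' == partial j pi]].

Definition edge_tau : rel {perm 'I_n} :=
  fun pi pi' => [&& linext pi, linext pi' & [exists j : 'I_n.-1, pi' == tau pi j]].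

Definition strongly_connected (e : rel {perm 'I_n}) : Prop :=
  forall pi pi', linext pi -> linext pi' -> connect e pi pi'.
End Defs.

From mathcomp Require Import all_boot all_fingroup zify.
Set Implicit Arguments. Unset Strict Implicit.

(* A linear extension pi <> id has an adjacent descent pi_a > pi_(a+1).  Natural
   labeling and pi \in L(P) make these two entries incomparable, so tau_a swaps
   them, which strictly decreases the disorder \sum_k k (n - pi_k).  Hence every
   linear extension reaches the identity along tau-edges, and tau-edges are
   symmetric because each tau_i is an involution.
   For the shifts, partial_j = tau_j partial_(j+1) and partial_(j+1) is an
   injective self-map of the finite set S_n, so pi tau_j lies on the forward
   partial_(j+1)-orbit of pi partial_j: every tau-edge is realised by a path of
   partial-edges. *)

Section AdjacentTranspositions.
Variable n : nat.
Implicit Types (a b p q : 'I_n) (pi : {perm 'I_n}).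

Lemma ltn_tperm_adjacent a b p q : b = a.+1 :> nat -> (p < q)%N ->
  (p != a) || (q != b) -> (tperm a b p < tperm a b q)%N.
Proof.
move=> Eb lt_pq; rewrite -!(inj_eq (@ord_inj n)).
have eq_val (x y : 'I_n) : x = y -> x = y :> nat by move->.
have neq_val (x y : 'I_n) : x <> y -> x <> y :> nat.
  by move=> neq eq_xy; apply: neq; apply: ord_inj.
by case: tpermP => [/eq_val + |/eq_val + |/neq_val + /neq_val +];
  case: tpermP => [/eq_val + |/eq_val + |/neq_val + /neq_val +]; lia.
Qed.

Definition disorder pi : nat := \sum_(k < n) k * (n - pi k).

Lemma disorder_swap_descent pi a b : b = a.+1 :> nat -> (pi b < pi a)%N ->
  (disorder (tperm a b * pi)%g < disorder pi)%N.
Proof.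
move=> Eb descent; have neq_ab : a != b by rewrite -(inj_eq (@ord_inj n)) Eb; lia.
have sum_split (f : 'I_n -> nat) : \sum_(k < n) k * f k =
    a * f a + b * f b + \sum_(k < n | (k != a) && (k != b)) k * f k.
  rewrite (bigD1 a) // (bigD1 b) 1?eq_sym //= addnA.
  by congr (_ + _); apply: eq_bigl => k; rewrite andbC.
rewrite /disorder (sum_split (fun k => n - (tperm a b * pi)%g k)) (sum_split (fun k => n - pi k)).
rewrite !permM tpermL tpermR (eq_bigr (fun k : 'I_n => k * (n - pi k))); last first.
  by move=> k /andP[ka kb]; rewrite permM tpermD // eq_sym.
have lt_compl : n - pi a < n - pi b by have := ltn_ord (pi a); lia.
rewrite ltn_add2r Eb !mulSn.
by move: (n - pi a) (n - pi b) lt_compl => x y; lia.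
Qed.

Lemma perm_adjacent_descent pi : pi != 1%g ->
  exists a b, b = a.+1 :> nat /\ (pi b < pi a)%N.
Proof.
move=> pi_neq1; have [k0 moved_k0] : exists k, pi k != k.
  apply/existsP; apply: contraR pi_neq1 => /existsPn fixed.
  by apply/eqP/permP => k; rewrite perm1; apply/eqP; rewrite -[_ == _]negbK fixed.
case: (@arg_minnP _ k0 (fun k => pi k != k) (@nat_of_ord n) moved_k0) => k moved_k min_k.
have fixed_below (j : 'I_n) : (j < k)%N -> pi j = j.
  by move=> lt_jk; apply/eqP; apply: contraTT lt_jk; rewrite -leqNgt; apply: min_k.
pose m := (pi^-1 k)%g; have pi_m : pi m = k by rewrite permKV.
have lt_km : (k < m)%N.
  case: ltngtP => // [lt_mk|eq_km].
    by have := fixed_below _ lt_mk; rewrite pi_m => eq_km; rewrite eq_km ltnn in lt_mk.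
  by move: moved_k; rewrite {1}(ord_inj eq_km) pi_m eqxx.
have lt_m1n : (m.-1 < n)%N by have := ltn_ord m; lia.
exists (Ordinal lt_m1n), m; split=> /=; first by lia.
rewrite pi_m; case: ltngtP => // [lt_ak|eq_ak].
  have /perm_inj fixed_a := fixed_below _ lt_ak.
  by rewrite fixed_a /= in lt_ak; lia.
have /perm_inj/(congr1 (@nat_of_ord n)) /= : pi (Ordinal lt_m1n) = pi m.
  by rewrite pi_m; apply: ord_inj.
lia.
Qed.
End AdjacentTranspositions.

Section AdjacentSwaps.
Variables (n : nat) (le : rel 'I_n).
Implicit Types (a b : 'I_n) (pi : {perm 'I_n}).

Lemma tauK i : involutive (tau le ^~ i).
Proof.
move=> pi; rewrite /tau; case: insubP => [a _ _|_] //; case: insubP => [b _ _|_] //.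
have [comp_ab|incomp_ab] /= := boolP (comparableP le (pi a) (pi b)); first by rewrite comp_ab.
rewrite !permM tpermL tpermR /comparableP orbC.
by rewrite /comparableP in incomp_ab; rewrite (negbTE incomp_ab) /= mulgA tperm2 mul1g.
Qed.

Lemma tau_adjacent pi a b : b = a.+1 :> nat -> ~~ comparableP le (pi a) (pi b) ->
  tau le pi a = (tperm a b * pi)%g.
Proof.
move=> Eb incomp_ab; rewrite /tau valK.
have -> : insub (nat_of_ord a).+1 = Some b by rewrite -Eb valK.
by rewrite incomp_ab.
Qed.

Lemma linext_tperm_incomparable pi a b : b = a.+1 :> nat ->
  ~~ comparableP le (pi a) (pi b) -> linext le pi -> linext le (tperm a b * pi).
Proof.
move=> Eb incomp_ab /forallP linext_pi.
apply/forallP => x; apply/forallP => y; apply/implyP => prec_xy.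
rewrite invMg tpermV !permM ltn_tperm_adjacent //.
  exact: implyP (forallP (linext_pi x) y) prec_xy.
rewrite -negb_and; apply: contra incomp_ab => /andP[/eqP <- /eqP <-]; rewrite !permKV.
by case/andP: prec_xy; rewrite /comparableP => ->.
Qed.

Lemma tau_linext pi i : linext le pi -> linext le (tau le pi i).
Proof.
rewrite /tau; case: insubP => [a _ Ea|_] //; case: insubP => [b _ Eb|_] //.
case: ifP => // incomp_ab; apply: linext_tperm_incomparable incomp_ab.
by have : val b = (val a).+1 by rewrite Ea Eb.
Qed.

Lemma edge_tau_sym : symmetric (edge_tau le).
Proof.
suff edge_tau_flip pi pi' : edge_tau le pi pi' -> edge_tau le pi' pi.
  by move=> pi pi'; apply/idP/idP; apply: edge_tau_flip.
case/and3P=> linext_pi linext_pi' /existsP[j /eqP def_pi'].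
by rewrite /edge_tau linext_pi linext_pi'; apply/existsP; exists j; rewrite def_pi' tauK.
Qed.

Section NaturalLabeling.
Hypothesis labeling : natural_labeling le.

Lemma adjacent_descent_incomparable pi a b : linext le pi -> b = a.+1 :> nat ->
  (pi b < pi a)%N -> ~~ comparableP le (pi a) (pi b).
Proof.
move=> /forallP linext_pi Eb descent; rewrite /comparableP negb_or.
have neq_piab : pi a != pi b.
  by rewrite (inj_eq perm_inj) -(inj_eq (@ord_inj n)) Eb; lia.
apply/andP; split; apply/negP => le_ab.
  by have := labeling (_ : prec le (pi a) (pi b)); rewrite /prec le_ab neq_piab; lia.
have := implyP (forallP (linext_pi (pi b)) (pi a)).
by rewrite /prec le_ab eq_sym neq_piab !permK => /(_ isT); lia.
Qed.

Lemma connect_edge_tau1 pi : linext le pi -> connect (edge_tau le) pi 1%g.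
Proof.
have [m] := ubnP (disorder pi); elim: m pi => // m IHm pi /ltnSE disorder_pi linext_pi.
have [->|/perm_adjacent_descent[a [b [Eb descent]]]] := eqVneq pi 1%g; first exact: connect0.
have incomp_ab := adjacent_descent_incomparable linext_pi Eb descent.
have linext_swap := linext_tperm_incomparable Eb incomp_ab linext_pi.
have lt_an1 : (a < n.-1)%N by have := ltn_ord b; lia.
apply: connect_trans (connect1 _) (IHm _ _ linext_swap).
  rewrite /edge_tau linext_pi linext_swap; apply/existsP; exists (Ordinal lt_an1).
  by rewrite /= (tau_adjacent Eb incomp_ab).
exact: leq_trans (disorder_swap_descent Eb descent) disorder_pi.
Qed.

Lemma edge_tau_strongly_connected : strongly_connected le (edge_tau le).
Proof.
move=> pi pi' linext_pi linext_pi'; apply: connect_trans (connect_edge_tau1 linext_pi) _.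
by rewrite (sym_connect_sym edge_tau_sym) connect_edge_tau1.
Qed.
End NaturalLabeling.
End AdjacentSwaps.

Section CyclicShifts.
Variables (n : nat) (le : rel 'I_n).

Lemma partial_linext j pi : linext le pi -> linext le (partial le j pi).
Proof. by rewrite /partial; elim: (iota _ _) pi => //= i s IHs pi /(tau_linext i)/IHs. Qed.

Lemma partial_inj j : injective (partial le j).
Proof.
rewrite /partial; elim: (iota _ _) => //= i s IHs pi pi' /IHs eq_tau.
by rewrite -(tauK le i pi) eq_tau tauK.
Qed.

Lemma partialS j pi : (j.+1 < n)%N -> partial le j pi = partial le j.+1 (tau le pi j).
Proof. by move=> lt_j1n; rewrite /partial (_ : n.-1 - j = (n.-1 - j.+1).+1)%N; last lia. Qed.

Lemma fconnect_partial_connect (j : 'I_n) pi pi' : linext le pi ->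
  fconnect (partial le j) pi pi' -> connect (edge_partial le) pi pi'.
Proof.
move=> linext_pi /connectP[p]; elim: p pi linext_pi => [|z p IHp] pi linext_pi /=.
  by move=> _ ->.
case/andP=> /eqP <- path_p last_p; have linext_j := partial_linext j linext_pi.
apply: connect_trans (connect1 _) (IHp _ linext_j path_p last_p).
by rewrite /edge_partial linext_pi linext_j; apply/existsP; exists j.
Qed.

Lemma edge_tau_connect_partial : subrel (edge_tau le) (connect (edge_partial le)).
Proof.
move=> pi _ /and3P[linext_pi _ /existsP[j /eqP ->]].
have lt_j1n : (j.+1 < n)%N by have := ltn_ord j; lia.
pose j0 : 'I_n := Ordinal (ltnW lt_j1n); pose j1 : 'I_n := Ordinal lt_j1n.
have linext_j0 := partial_linext j0 linext_pi.
apply: connect_trans (connect1 (_ : edge_partial le pi (partial le j0 pi))) _.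
  by rewrite /edge_partial linext_pi linext_j0; apply/existsP; exists j0.
apply: (@fconnect_partial_connect j1 _ _ linext_j0).
by rewrite (partialS _ lt_j1n) (fconnect_sym (@partial_inj j1)) fconnect1.
Qed.
End CyclicShifts.

Theorem proposition4p1 (n : nat) (le : rel 'I_n) :
  is_poset le -> natural_labeling le ->
  strongly_connected le (edge_partial le) /\ strongly_connected le (edge_tau le).
Proof.
move=> _ labeling; have tau_connected := edge_tau_strongly_connected labeling.
split=> // pi pi' linext_pi linext_pi'.
exact: (connect_sub (@edge_tau_connect_partial n le) (tau_connected _ _ linext_pi linext_pi')).
Qed.
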